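(* Let $n\le N$ and let $\boldsymbol A$ be an $n\times N$ random matrix with independent entries, each equal to $1$ with probability $p$ and to $-\tilde\sigma_p^2=-p/(1-p)$ with probability $1-p$, where $p$ is bounded away from $1$ and $n\ge C_0\log N$ for a sufficiently large constant $C_0$. Let $n_j$ be the number of entries equal to $1$ in column $j$ of $\boldsymbol A$, and define $\tilde{\boldsymbol A}$ by $\tilde A_{ij}=1$ if $A_{ij}=1$ and $\tilde A_{ij}=-n_j/(n-n_j)$ if $A_{ij}=-\tilde\sigma_p^2$. Then there are constants $c_1,c_2>0$ such that $$ \Pr\left(\|\boldsymbol A-\tilde{\boldsymbol A}\|\ge c_1\max\left\{\sqrt{\tilde\sigma_p^2N}\log N,\ (\log N)^{3/2}\right\}\right)\le c_2N^{-5}. $$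
   Context: $\|\cdot\|$ denotes the spectral norm. Parameters $n,p$ may depend on $N$; constants are independent of $N$. (If $n_j=n$ the column of $\tilde{\boldsymbol A}$ has no entries of the second type, so the definition is well posed.) *)

From HB Require Import structures.
From mathcomp Require Import all_boot.
From Stdlib Require Import Reals ClassicalEpsilon.

Set Implicit Arguments.
Unset Strict Implicit.
Unset Printing Implicit Defensive.

Definition rsum (I : finType) (F : I -> R) : R := \big[Rplus/0%R]_(i : I) F i.

(* sample space: w (i,j) = true  iff  A_ij = 1 *)
Definition config (n N : nat) := {ffun 'I_n * 'I_N -> bool}.

Definition weight (n N : nat) (p : R) (w : config n N) : R :=
  \big[Rmult/1%R]_(k : 'I_n * 'I_N) (if w k then p else (1 - p)%R).

Definition prob (n N : nat) (p : R) (E : config n N -> Prop) : R :=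
  rsum (fun w : config n N =>
          if excluded_middle_informative (E w) then weight p w else 0%R).

Definition sigma2 (p : R) : R := (p / (1 - p))%R.

Definition Amat (n N : nat) (p : R) (w : config n N) (i : 'I_n) (j : 'I_N) : R :=
  if w (i, j) then 1%R else (- sigma2 p)%R.

Definition ncol (n N : nat) (w : config n N) (j : 'I_N) : nat :=
  #|[pred i : 'I_n | w (i, j)]|.

Definition Atil (n N : nat) (w : config n N) (i : 'I_n) (j : 'I_N) : R :=
  if w (i, j) then 1%R
  else (- (INR (ncol w j) / (INR n - INR (ncol w j))))%R.

Definition opnorm_set (n N : nat) (M : 'I_n -> 'I_N -> R) (r : R) : Prop :=
  exists x : 'I_N -> R,
    rsum (fun j => (x j ^ 2)%R) = 1%R /\
    r = sqrt (rsum (fun i => (rsum (fun j => (M i j * x j)%R)) ^ 2)%R).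

Definition opnorm (n N : nat) (M : 'I_n -> 'I_N -> R) : R :=
  epsilon (inhabits 0%R) (fun s => is_lub (opnorm_set M) s).

From HB Require Import structures.
From mathcomp Require Import all_boot.
From Stdlib Require Import Reals Lra Psatz ClassicalEpsilon.
Open Scope R_scope.
Set Implicit Arguments.
Unset Strict Implicit.

(* Concentration of  A - Ã.  Write  m = n,  L = ln N,  d_j = n_j - p n  for
   the deviation of column j, and  a = 1 - p0 <= 1 - p.

   The argument is deterministic once the column counts are controlled.
   After generalities on finite sums, the spectral norm is bounded by the
   Frobenius norm (Cauchy-Schwarz).  An entry of A - Ã vanishes
   where A_ij = 1 and otherwise equals  n_j/(n - n_j) - p/(1 - p), whose
   square is at most  4 d_j^2 / (a^4 n^2)  when |d_j| <= a n / 2.  A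
   deviation level tau, chosen according to whether p n >= 12 L, is
   "admissible": the Chernoff bound at tau is N^-6, and |d_j| < tau together
   with  sum_j n_j < 2 p n N + 12 L  forces  sum_j d_j^2 <= 1500 n
   (sigma_p^2 N L^2 + L^3).  Off the 2N + 1 bad events (some |d_j| >= tau, or
   a large total count), of probability <= 3 N^-5, the norm is therefore
   below  c1 max(sqrt(sigma_p^2 N) L, L^(3/2)). *)

HB.instance Definition _ := Monoid.isComLaw.Build R 0%R Rplus
  (fun a b c => esym (Rplus_assoc a b c)) Rplus_comm Rplus_0_l.
HB.instance Definition _ := Monoid.isComLaw.Build R 1%R Rmult
  (fun a b c => esym (Rmult_assoc a b c)) Rmult_comm Rmult_1_l.
HB.instance Definition _ := Monoid.isMulLaw.Build R 0%R Rmult Rmult_0_l Rmult_0_r.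
HB.instance Definition _ := Monoid.isAddLaw.Build R Rmult Rplus
  Rmult_plus_distr_r Rmult_plus_distr_l.

Lemma rsum_ext (I : finType) (F G : I -> R) :
  (forall i, F i = G i) -> rsum F = rsum G.
Proof. by move=> FG; apply: eq_bigr. Qed.

Lemma rsum_le (I : finType) (F G : I -> R) :
  (forall i, F i <= G i) -> rsum F <= rsum G.
Proof. by move=> FG; rewrite /rsum; elim/big_ind2: _ => // *; lra. Qed.

Lemma rsum_ge0 (I : finType) (F : I -> R) : (forall i, 0 <= F i) -> 0 <= rsum F.
Proof. by move=> F0; rewrite /rsum; elim/big_ind: _ => // *; lra. Qed.

Lemma rsumD (I : finType) (F G : I -> R) :
  rsum (fun i => F i + G i) = rsum F + rsum G.
Proof. exact: big_split. Qed.

Lemma rsumZ (I : finType) (a : R) (F : I -> R) :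
  rsum (fun i => a * F i) = a * rsum F.
Proof. by rewrite /rsum big_distrr. Qed.

Lemma rsumZr (I : finType) (a : R) (F : I -> R) :
  rsum (fun i => F i * a) = rsum F * a.
Proof. by rewrite /rsum big_distrl. Qed.

Lemma rsum_const (n : nat) (c : R) : rsum (fun _ : 'I_n => c) = INR n * c.
Proof.
rewrite /rsum big_const_ord; elim: n => [|n IH] /=; first lra.
by rewrite IH; case: n {IH} => [|n] /=; lra.
Qed.

Lemma rsum_pair (n N : nat) (G : 'I_n * 'I_N -> R) :
  rsum G = rsum (fun i => rsum (fun j => G (i, j))).
Proof. by rewrite /rsum pair_bigA; apply: eq_bigr => -[i j]. Qed.

Lemma rsum_delta (N : nat) (j : 'I_N) (F : 'I_N -> R) :
  rsum (fun j' => if j' == j then F j' else 0) = F j.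
Proof.
rewrite /rsum (bigD1 j) //= eqxx big1; first lra.
by move=> i /negbTE ->.
Qed.

Lemma INR_card (I : finType) (P : pred I) :
  INR #|P| = rsum (fun i => if P i then 1 else 0).
Proof.
rewrite -sum1_card big_mkcond /rsum.
rewrite (big_morph INR (fun a b => plus_INR a b) (erefl (INR 0))).
by apply: eq_bigr => i _; rewrite /in_mem /=; case: (P i).
Qed.

Lemma exp_rsum (I : finType) (F : I -> R) :
  exp (rsum F) = \big[Rmult/1]_(i : I) exp (F i).
Proof. exact: (big_morph exp exp_plus exp_0). Qed.

Lemma prod_le (I : finType) (F G : I -> R) :
  (forall i, 0 <= F i <= G i) ->
  0 <= \big[Rmult/1]_(i : I) F i <= \big[Rmult/1]_(i : I) G i.
Proof.
move=> FG; elim/big_ind2: _ => //; first lra.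
by move=> x1 x2 y1 y2 [? ?] [? ?]; split; nra.
Qed.

(** The spectral norm is bounded by the Frobenius norm *)

Lemma cauchy_schwarz (I : finType) (a x : I -> R) :
  (rsum (fun j => a j * x j)) ^ 2 <=
  rsum (fun j => a j ^ 2) * rsum (fun j => x j ^ 2).
Proof.
(* Lagrange's identity: the gap is half a sum of squares. *)
have lagrange : rsum (fun j => rsum (fun k => (a j * x k - a k * x j) ^ 2)) =
    2 * (rsum (fun j => a j ^ 2) * rsum (fun j => x j ^ 2))
    - 2 * (rsum (fun j => a j * x j)) ^ 2.
  rewrite (rsum_ext (G := fun j => a j ^ 2 * rsum (fun k => x k ^ 2)
             + x j ^ 2 * rsum (fun k => a k ^ 2)
             + (-2 * (a j * x j)) * rsum (fun k => a k * x k))); last first.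
    by move=> j; rewrite -!rsumZ -!rsumD; apply: rsum_ext => k; ring.
  by rewrite !rsumD !rsumZr rsumZ; ring.
have : 0 <= rsum (fun j => rsum (fun k => (a j * x k - a k * x j) ^ 2)).
  by apply: rsum_ge0 => j; apply: rsum_ge0 => k; apply: pow2_ge_0.
lra.
Qed.

(* By Cauchy-Schwarz on each row, |M x|^2 <= ||M||_F^2 for unit x; so any
   B >= ||M||_F bounds the least upper bound  opnorm M  (which exists since
   the set of values |M x| is bounded and nonempty). *)
Lemma opnorm_le_frobenius (n N : nat) (M : 'I_n -> 'I_N -> R) (B : R) :
  (0 < N)%nat -> 0 <= B ->
  rsum (fun i => rsum (fun j => M i j ^ 2)) <= B ^ 2 -> opnorm M <= B.
Proof.
move=> N_gt0 B_ge0 frob.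
have ub : is_upper_bound (opnorm_set M) B.
  move=> r [x [x_unit ->]].
  rewrite -(sqrt_pow2 B B_ge0); apply: sqrt_le_1_alt.
  apply: Rle_trans frob; apply: rsum_le => i.
  by have := cauchy_schwarz (M i) x; rewrite x_unit Rmult_1_r.
have nonempty : exists r, opnorm_set M r.
  pose e := fun j : 'I_N => if j == Ordinal N_gt0 then 1 else 0.
  exists (sqrt (rsum (fun i => (rsum (fun j => M i j * e j)) ^ 2))), e.
  split=> //; rewrite /e (rsum_ext (G := fun j => if j == Ordinal N_gt0 then 1 else 0)).
    by rewrite rsum_delta.
  by move=> j; case: (j == _); ring.
have [s lub] := completeness _ (ex_intro _ B ub) nonempty.
have : is_lub (opnorm_set M) (opnorm M) by apply: epsilon_spec; exists s.
by case=> _; apply.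
Qed.

Lemma exp_le_mono x y : x <= y -> exp x <= exp y.
Proof. by case/Rle_lt_or_eq_dec => [/exp_increasing|->]; lra. Qed.

Lemma one_le_exp x : 0 <= x -> 1 <= exp x.
Proof. by move=> x_ge0; have := exp_ineq1_le x; lra. Qed.

(* Quadratic upper bounds on exp(+-l) for small l, from  exp(-+l) >= 1 -+ l
   and  exp l * exp (-l) = 1. *)
Lemma exp_le_quad l : 0 <= l <= 1/2 -> exp l <= 1 + l + 2 * l ^ 2.
Proof.
move=> l_small; have := exp_ineq1_le (- l); have := exp_pos l.
have : exp l * exp (- l) = 1 by rewrite -exp_plus Rplus_opp_r exp_0.
nra.
Qed.

Lemma exp_neg_le_quad l : 0 <= l <= 1/2 -> exp (- l) <= 1 - l + 2 * l ^ 2.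
Proof.
move=> l_small; have := exp_ineq1_le l; have := exp_pos (- l).
have : exp l * exp (- l) = 1 by rewrite -exp_plus Rplus_opp_r exp_0.
nra.
Qed.

(** The Bernoulli product measure on configurations *)

Ltac decide_events :=
  repeat match goal with
  | |- context [excluded_middle_informative ?P] =>
      destruct (excluded_middle_informative P); cbn [is_left]
  end.

Section ProductMeasure.
Variables (n N : nat) (p : R).
Hypothesis p01 : 0 <= p <= 1.

Lemma weight_ge0 (w : config n N) : 0 <= weight p w.
Proof.
rewrite /weight; elim/big_ind: _ => [|*|k _]; [lra | nra | by case: (w k); lra].
Qed.

Lemma expectation_prod (g : 'I_n * 'I_N -> bool -> R) :
  rsum (fun w : config n N =>
          weight p w * \big[Rmult/1]_(k : 'I_n * 'I_N) g k (w k)) =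
  \big[Rmult/1]_(k : 'I_n * 'I_N) (p * g k true + (1 - p) * g k false).
Proof.
rewrite /rsum (eq_bigr (fun w : config n N => \big[Rmult/1]_(k : 'I_n * 'I_N)
    ((if w k then p else 1 - p) * g k (w k)))); last first.
  by move=> w _; rewrite /weight big_split.
rewrite -(bigA_distr_bigA (fun k (b : bool) => (if b then p else 1 - p) * g k b)).
by apply: eq_bigr => k _; rewrite big_bool.
Qed.

(* The weights sum to 1. *)
Lemma prob_le1 (E : config n N -> Prop) : prob p E <= 1.
Proof.
have total : rsum (fun w : config n N => weight p w) = 1.
  transitivity (rsum (fun w : config n N =>
      weight p w * \big[Rmult/1]_(k : 'I_n * 'I_N) 1)).
    by apply: rsum_ext => w; rewrite big1_eq Rmult_1_r.
  by rewrite (expectation_prod (fun _ _ => 1)) (eq_bigr (fun _ => 1)) ?big1_eq // => k _; ring.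
rewrite -[X in _ <= X]total.
by apply: rsum_le => w; have := weight_ge0 w; decide_events; lra.
Qed.

Lemma prob_mono (E F : config n N -> Prop) :
  (forall w, E w -> F w) -> prob p E <= prob p F.
Proof.
move=> EF; apply: rsum_le => w; have := weight_ge0 w.
by decide_events; try lra; exfalso; auto.
Qed.

Lemma prob_markov (E : config n N -> Prop) (f : config n N -> R) :
  (forall w, 0 <= f w) -> (forall w, E w -> 1 <= f w) ->
  prob p E <= rsum (fun w => weight p w * f w).
Proof.
move=> f_ge0 f_ge1; apply: rsum_le => w.
have := weight_ge0 w; have := f_ge0 w.
by decide_events; [have := f_ge1 w ltac:(assumption) |]; nra.
Qed.

Lemma prob_union2 (E F : config n N -> Prop) :
  prob p (fun w => E w \/ F w) <= prob p E + prob p F.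
Proof.
rewrite /prob -rsumD; apply: rsum_le => w; have := weight_ge0 w.
by decide_events; lra || tauto.
Qed.

Lemma prob_union_cols (E : 'I_N -> config n N -> Prop) :
  prob p (fun w => exists j, E j w) <= rsum (fun j => prob p (E j)).
Proof.
rewrite /prob /rsum exchange_big /=; apply: rsum_le => w.
have term_ge0 j : 0 <= if excluded_middle_informative (E j w) then weight p w else 0.
  by have := weight_ge0 w; decide_events; lra.
destruct (excluded_middle_informative (exists j, E j w)) as [[j Ej]|no_col];
  cbn [is_left]; last exact: rsum_ge0.
rewrite (bigD1 j) //=.
destruct (excluded_middle_informative (E j w)) => //=.
rewrite -[X in X <= _]Rplus_0_r; apply: Rplus_le_compat_l.
by elim/big_ind: _ => [|x y ? ?|i _]; [lra | lra | exact: term_ge0].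
Qed.

Lemma prob_union_cols_le (E : 'I_N -> config n N -> Prop) (q : R) :
  (forall j, prob p (E j) <= q) -> prob p (fun w => exists j, E j w) <= INR N * q.
Proof.
move=> E_small; apply: Rle_trans (prob_union_cols E) _.
by rewrite -rsum_const; apply: rsum_le.
Qed.

(** Chernoff bounds for the number of successes in a set of positions *)

Definition npos (c : 'I_n * 'I_N -> bool) : R :=
  rsum (fun k => if c k then 1 else 0).
Definition nsucc (c : 'I_n * 'I_N -> bool) (w : config n N) : R :=
  rsum (fun k => if c k && w k then 1 else 0).

Lemma npos_ge0 c : 0 <= npos c.
Proof. by apply: rsum_ge0 => k; case: (c k); lra. Qed.

Lemma exp_moment (mu b : R) c :
  rsum (fun w => weight p w * exp (mu * nsucc c w + b)) <=
  exp (b + p * (exp mu - 1) * npos c).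
Proof.
pose g k (x : bool) := exp (mu * (if c k && x then 1 else 0)).
rewrite exp_plus (rsum_ext (G := fun w => exp b *
    (weight p w * \big[Rmult/1]_(k : 'I_n * 'I_N) g k (w k)))).
  rewrite rsumZ (expectation_prod g) /npos -rsumZ exp_rsum /g.
  apply: Rmult_le_compat_l; first by have := exp_pos b; lra.
  apply: (proj2 (prod_le _)) => k; case: (c k) => /=; rewrite ?Rmult_0_r ?Rmult_1_r ?exp_0; last lra.
  by have := exp_ineq1_le (p * (exp mu - 1)); have := exp_pos mu; nra.
by move=> w; rewrite exp_plus /nsucc -rsumZ exp_rsum /g /=; ring.
Qed.

(* Upper and lower Chernoff tails:  P(S - E S >= t) and P(E S - S >= t)  are
   at most  exp(2 E S l^2 - l t)  for 0 < l <= 1/2, by Markov's inequality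
   applied to  exp(+-l S)  and the quadratic bounds on the exponential. *)
Lemma chernoff_upper c t l : 0 < l <= 1/2 ->
  prob p (fun w => t <= nsucc c w - p * npos c) <=
  exp (2 * p * npos c * l ^ 2 - l * t).
Proof.
move=> l_small; have := npos_ge0 c => c_ge0.
apply: Rle_trans (_ : _ <= rsum (fun w =>
    weight p w * exp (l * nsucc c w + - l * (p * npos c + t)))) _.
  apply: prob_markov => w; first by apply: Rlt_le; apply: exp_pos.
  by move=> large; apply: one_le_exp; nra.
apply: Rle_trans (exp_moment _ _ _) _; apply: exp_le_mono.
have := exp_le_quad (conj (Rlt_le _ _ (proj1 l_small)) (proj2 l_small)).
have : 0 <= p * npos c by nra.
nra.
Qed.

Lemma chernoff_lower c t l : 0 < l <= 1/2 ->
  prob p (fun w => t <= p * npos c - nsucc c w) <=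
  exp (2 * p * npos c * l ^ 2 - l * t).
Proof.
move=> l_small; have := npos_ge0 c => c_ge0.
apply: Rle_trans (_ : _ <= rsum (fun w =>
    weight p w * exp ((- l) * nsucc c w + l * (p * npos c - t)))) _.
  apply: prob_markov => w; first by apply: Rlt_le; apply: exp_pos.
  by move=> small; apply: one_le_exp; nra.
apply: Rle_trans (exp_moment _ _ _) _; apply: exp_le_mono.
have := exp_neg_le_quad (conj (Rlt_le _ _ (proj1 l_small)) (proj2 l_small)).
have : 0 <= p * npos c by nra.
nra.
Qed.

End ProductMeasure.

Definition col_pos (n N : nat) (j : 'I_N) : 'I_n * 'I_N -> bool := fun k => k.2 == j.
Definition all_pos (n N : nat) : 'I_n * 'I_N -> bool := fun _ => true.
Arguments col_pos n {N} j.
Arguments all_pos : clear implicits.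

Definition col_dev (n N : nat) (p : R) (w : config n N) (j : 'I_N) : R :=
  INR (ncol w j) - p * INR n.

Lemma ncol_nsucc (n N : nat) (w : config n N) j :
  INR (ncol w j) = nsucc (col_pos n j) w.
Proof.
rewrite /ncol INR_card /nsucc rsum_pair; apply: rsum_ext => i /=.
rewrite /col_pos /= (rsum_ext (G := fun j' => if j' == j
                                   then (if w (i, j') then 1 else 0) else 0)).
  by rewrite rsum_delta.
by move=> j'; case: (j' == j).
Qed.

Lemma npos_col (n N : nat) (j : 'I_N) : npos (col_pos n j) = INR n.
Proof.
rewrite /npos rsum_pair (rsum_ext (G := fun _ => 1)); first by rewrite rsum_const; ring.
by move=> i /=; rewrite /col_pos /= (rsum_ext (G := fun j' => if j' == j then 1 else 0))
  ?rsum_delta.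
Qed.

Lemma npos_all (n N : nat) : npos (all_pos n N) = INR n * INR N.
Proof.
rewrite /npos rsum_pair (rsum_ext (G := fun _ => INR N)); first by rewrite rsum_const.
by move=> i /=; rewrite /all_pos rsum_const; ring.
Qed.

Lemma nsucc_all (n N : nat) (w : config n N) :
  nsucc (all_pos n N) w = rsum (fun j => INR (ncol w j)).
Proof.
rewrite (rsum_ext (G := fun j => nsucc (col_pos n j) w)); last exact: ncol_nsucc.
rewrite /nsucc [in RHS]/rsum exchange_big; apply: rsum_ext => k /=.
transitivity (rsum (fun j => if j == k.2 then (if w k then 1 else 0) else 0)).
  by rewrite rsum_delta.
by apply: rsum_ext => j; rewrite /col_pos [k.2 == j]eq_sym; case: (j == k.2).
Qed.

(* An entry of A - Ã at a (-sigma_p^2) position of column j equals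
   n_j/(n - n_j) - p/(1 - p); it is controlled by the deviation x - p m
   as long as column j is not too full. *)
Lemma entry_sq_bound x m p a :
  0 < m -> 0 < p < 1 -> 0 < a <= 1 - p -> (1 - p) * m / 2 <= m - x ->
  (x / (m - x) - p / (1 - p)) ^ 2 <= 4 * (x - p * m) ^ 2 / (a ^ 4 * m ^ 2).
Proof.
move=> m_gt0 p01 a_range room.
have room_gt0 : 0 < m - x by nra.
have Q_gt0 : 0 < (m - x) * (1 - p) by apply: Rmult_lt_0_compat; lra.
have -> : x / (m - x) - p / (1 - p) = (x - p * m) / ((m - x) * (1 - p))
  by field; lra.
have Q_ge : a ^ 2 * m / 2 <= (m - x) * (1 - p).
  have : a ^ 2 <= (1 - p) ^ 2 by apply: pow_incr; lra.
  have : (1 - p) * m / 2 * (1 - p) <= (m - x) * (1 - p)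
    by apply: Rmult_le_compat_r; lra.
  nra.
have a2m_gt0 : 0 < a ^ 2 * m / 2 by have := pow_lt a 2 (proj1 a_range); nra.
have inv_le := Rinv_le_contravar _ _ a2m_gt0 Q_ge.
have inv_ge0 : 0 < / ((m - x) * (1 - p)) by apply: Rinv_0_lt_compat.
rewrite /Rdiv Rpow_mult_distr
  (_ : 4 * (x - p * m) ^ 2 * / (a ^ 4 * m ^ 2) =
       (x - p * m) ^ 2 * (/ (a ^ 2 * m / 2)) ^ 2); last by field; lra.
by apply: Rmult_le_compat_l; [apply: pow2_ge_0 | apply: pow_incr; lra].
Qed.

Lemma frobenius_by_col_dev (n N : nat) (p a : R) (w : config n N) :
  (0 < n)%nat -> 0 < p < 1 -> 0 < a <= 1 - p ->
  (forall j, col_dev p w j <= a * INR n / 2) ->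
  rsum (fun i => rsum (fun j => (Amat p w i j - Atil w i j) ^ 2)) <=
  4 / (a ^ 4 * INR n) * rsum (fun j => col_dev p w j ^ 2).
Proof.
move=> n_gt0 p01 a_range dev_le.
have m_gt0 : 0 < INR n by apply: lt_0_INR; apply/ltP.
have entry i j : (Amat p w i j - Atil w i j) ^ 2 <=
                 4 / (a ^ 4 * INR n ^ 2) * col_dev p w j ^ 2.
  rewrite /Amat /Atil /col_dev; case: (w (i, j)).
    have : 0 <= 4 / (a ^ 4 * INR n ^ 2) * (INR (ncol w j) - p * INR n) ^ 2.
      apply: Rmult_le_pos; last exact: pow2_ge_0.
      by apply: Rlt_le; apply: Rdiv_lt_0_compat; [lra | apply: Rmult_lt_0_compat;
        apply: pow_lt; lra].
    by rewrite (_ : (1 - 1) ^ 2 = 0); [lra | ring].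
  rewrite (_ : - sigma2 p - - (INR (ncol w j) / (INR n - INR (ncol w j))) =
     INR (ncol w j) / (INR n - INR (ncol w j)) - p / (1 - p)); last by rewrite /sigma2; ring.
  rewrite (_ : 4 / (a ^ 4 * INR n ^ 2) * _ =
     4 * (INR (ncol w j) - p * INR n) ^ 2 / (a ^ 4 * INR n ^ 2)); last by rewrite /Rdiv; ring.
  apply: entry_sq_bound => //.
  have := dev_le j; rewrite /col_dev.
  have : a * INR n <= (1 - p) * INR n by apply: Rmult_le_compat_r; lra.
  lra.
apply: Rle_trans (rsum_le (fun i => rsum_le (entry i))) _.
rewrite rsum_const -!rsumZ; apply: Req_le; apply: rsum_ext => j.
have a4_gt0 : 0 < a ^ 4 by apply: pow_lt; lra.
by field; lra.
Qed.

(** Choice of the deviation level *)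

(* If |d_j| < tau and d_j >= -q, then d_j^2 <= tau (d_j + 2 q); summing,
   the squared deviations are controlled by the total mass. *)
Lemma sum_sq_le_mass (N : nat) (d : 'I_N -> R) (tau q : R) :
  0 <= q -> (forall j, - tau < d j < tau) -> (forall j, 0 <= d j + q) ->
  rsum (fun j => d j ^ 2) <= tau * (rsum (fun j => d j + q) + INR N * q).
Proof.
move=> q_ge0 d_small d_ge.
rewrite -rsum_const -rsumD -rsumZ; apply: rsum_le => j.
have := d_small j; have := d_ge j.
by case: (Rle_lt_dec 0 (d j)) => d_sign; nra.
Qed.

Section DeviationLevel.
Variables (N : nat) (m L p a s2 : R).
Hypotheses (m_ge1 : 1 <= m) (L_gt : 1/2 < L) (p_range : 0 < p <= 1)
  (a_range : 0 < a <= 1) (p_le_s2 : p <= s2) (m_large : 192 * L <= a ^ 2 * m).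

(* A level tau is admissible when (i) the Chernoff exponent at tau for a
   column count (mean p m) is at most -6 L for some l in (0, 1/2], (ii) a
   deviation below tau leaves room in the column, and (iii) deviations below
   tau with bounded total mass have a small sum of squares. *)
Definition admissible_level (tau : R) : Prop :=
  (exists l, 0 < l <= 1/2 /\ 2 * p * m * l ^ 2 - l * tau <= - (6 * L)) /\
  tau <= a * m / 2 /\
  forall d : 'I_N -> R, (forall j, - tau < d j < tau) ->
    (forall j, 0 <= d j + p * m) ->
    rsum (fun j => d j + p * m) <= 2 * p * m * INR N + 12 * L ->
    rsum (fun j => d j ^ 2) <= 1500 * m * (s2 * INR N * L ^ 2 + L ^ 3).

(* The term  p m N L  is absorbed by  sigma_p^2 N L^2 m  (as p <= sigma_p^2
   and L > 1/2). *)
Lemma mean_term_absorbed : p * m * INR N * L <= 2 * (s2 * INR N * L ^ 2 * m).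
Proof.
have : 0 <= INR N * m by apply: Rmult_le_pos; [apply: pos_INR | lra].
have : p * L <= s2 * (2 * L ^ 2) by apply: Rmult_le_compat; nra.
nra.
Qed.

Lemma variance_term_ge0 : 0 <= s2 * INR N * L ^ 2 * m.
Proof.
have := pos_INR N; have : 0 <= L ^ 2 by apply: pow2_ge_0.
move=> *; repeat apply: Rmult_le_pos; lra.
Qed.

(* Moderately dense columns (p m >= 12 L): the Gaussian-regime level
   tau = 4 sqrt(3 p m L), with l = sqrt(3 L / (p m)). *)
Lemma moderate_level_admissible :
  12 * L <= p * m -> admissible_level (4 * sqrt (3 * p * m * L)).
Proof.
move=> dense.
have pm_gt0 : 0 < p * m by lra.
have tau_sq : (4 * sqrt (3 * p * m * L)) ^ 2 = 48 * p * m * L.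
  by rewrite Rpow_mult_distr pow2_sqrt; [ring | nra].
have tau_ge0 : 0 <= 4 * sqrt (3 * p * m * L) by have := sqrt_pos (3 * p * m * L); lra.
split; [|split].
- exists (sqrt (3 * L / (p * m))); split; first split.
  + by apply: sqrt_lt_R0; apply: Rdiv_lt_0_compat; lra.
  + rewrite -(sqrt_pow2 (1/2)); last lra.
    apply: sqrt_le_1_alt.
    have : 3 * L / (p * m) * (p * m) = 3 * L by field; lra.
    nra.
  + have l_sq : sqrt (3 * L / (p * m)) ^ 2 = 3 * L / (p * m).
      by apply: pow2_sqrt; apply: Rlt_le; apply: Rdiv_lt_0_compat; lra.
    have l_tau : sqrt (3 * L / (p * m)) * (4 * sqrt (3 * p * m * L)) = 12 * L.
      rewrite Rmult_comm Rmult_assoc -sqrt_mult; [|nra|apply: Rlt_le; apply: Rdiv_lt_0_compat; lra].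
      rewrite (_ : 3 * p * m * L * (3 * L / (p * m)) = (3 * L) ^ 2); last by field; lra.
      by rewrite sqrt_pow2; lra.
    rewrite l_sq l_tau (_ : 2 * p * m * (3 * L / (p * m)) = 6 * L); [lra | by field; lra].
- have : 0 <= a * m / 2 by nra.
  have : (4 * sqrt (3 * p * m * L)) ^ 2 <= (a * m / 2) ^ 2 by rewrite tau_sq; nra.
  nra.
- move=> d d_small _ _.
  apply: Rle_trans (_ : _ <= rsum (fun _ : 'I_N => 48 * p * m * L)) _.
    by apply: rsum_le => j; have := d_small j; rewrite -tau_sq; nra.
  rewrite rsum_const; have := mean_term_absorbed; have := variance_term_ge0.
  have : 0 <= L ^ 3 * m by apply: Rmult_le_pos; [apply: pow_le|]; lra.
  nra.
Qed.

(* Sparse columns (p m < 12 L): the Poisson-regime level tau = p m + 12 L,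
   with l = 1/2. *)
Lemma sparse_level_admissible :
  p * m < 12 * L -> admissible_level (p * m + 12 * L).
Proof.
move=> sparse.
have pm_ge0 : 0 <= p * m by nra.
split; [|split].
- by exists (1/2); split; lra.
- nra.
- move=> d d_small d_ge mass.
  apply: Rle_trans (sum_sq_le_mass pm_ge0 d_small d_ge) _.
  apply: Rle_trans (_ : _ <= 24 * L * (3 * p * m * INR N + 12 * L)) _.
    apply: Rmult_le_compat; try lra.
    by apply: Rplus_le_le_0_compat; [exact: rsum_ge0 | apply: Rmult_le_pos; [apply: pos_INR|]].
  have := mean_term_absorbed.
  have : L ^ 2 * 1 <= L ^ 2 * (2 * L * m) by apply: Rmult_le_compat_l; nra.
  have := variance_term_ge0.
  nra.
Qed.

Lemma exists_admissible_level : exists tau, admissible_level tau.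
Proof.
case: (Rle_lt_dec (12 * L) (p * m)) => regime.
- by eexists; apply: moderate_level_admissible.
- by eexists; apply: sparse_level_admissible.
Qed.

End DeviationLevel.

(** The bad events and their probability *)

Definition bad_counts (n N : nat) (p tau L : R) (w : config n N) : Prop :=
  (exists j, tau <= col_dev p w j) \/ (exists j, tau <= - col_dev p w j) \/
  2 * p * INR n * INR N + 12 * L <= rsum (fun j => INR (ncol w j)).

Lemma exp_neg_ln (x : R) (k : nat) : 0 < x -> exp (- (INR k * ln x)) = / x ^ k.
Proof. by move=> x_gt0; rewrite -ln_pow // exp_Ropp exp_ln //; apply: pow_lt. Qed.

(* Union bound over the 2N column events and the total-count event, each of
   probability at most N^-6 by the Chernoff bounds. *)
Lemma bad_counts_prob (n N : nat) (p tau l : R) :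
  (0 < N)%nat -> 0 <= p <= 1 -> 0 < l <= 1/2 ->
  2 * p * INR n * l ^ 2 - l * tau <= - (6 * ln (INR N)) ->
  prob p (@bad_counts n N p tau (ln (INR N))) <= 3 * / INR N ^ 5.
Proof.
move=> N_gt0 p01 l_range l_exp.
have N_ge1 : 1 <= INR N by apply: (le_INR 1); apply/leP.
have tail : exp (- (6 * ln (INR N))) = / INR N ^ 6.
  by rewrite (_ : 6 = INR 6) ?exp_neg_ln //=; [lra | ring].
have col_high j : prob p (fun w : config n N => tau <= col_dev p w j) <= / INR N ^ 6.
  apply: Rle_trans (prob_mono p01
    (F := fun w => tau <= nsucc (col_pos n j) w - p * npos (col_pos n j)) _) _.
    by move=> w; rewrite /col_dev ncol_nsucc npos_col.
  apply: Rle_trans (chernoff_upper p01 _ _ l_range) _.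
  by rewrite -tail npos_col; apply: exp_le_mono; lra.
have col_low j : prob p (fun w : config n N => tau <= - col_dev p w j) <= / INR N ^ 6.
  apply: Rle_trans (prob_mono p01
    (F := fun w => tau <= p * npos (col_pos n j) - nsucc (col_pos n j) w) _) _.
    by move=> w; rewrite /col_dev ncol_nsucc npos_col; lra.
  apply: Rle_trans (chernoff_lower p01 _ _ l_range) _.
  by rewrite -tail npos_col; apply: exp_le_mono; lra.
have total : prob p (fun w : config n N => 2 * p * INR n * INR N + 12 * ln (INR N) <=
                                           rsum (fun j => INR (ncol w j))) <= / INR N ^ 6.
  have half : 0 < 1/2 <= 1/2 by lra.
  apply: Rle_trans (prob_mono p01 (F := fun w => p * INR n * INR N + 12 * ln (INR N)
    <= nsucc (all_pos n N) w - p * npos (all_pos n N)) _) _.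
    by move=> w; rewrite nsucc_all npos_all; lra.
  apply: Rle_trans (chernoff_upper p01 _ _ half) _.
  by rewrite -tail npos_all; apply: exp_le_mono; lra.
have N_tail : INR N * / INR N ^ 6 = / INR N ^ 5 by field; lra.
have tail_le : / INR N ^ 6 <= / INR N ^ 5.
  apply: Rinv_le_contravar; first by apply: pow_lt; lra.
  by rewrite -[X in X <= _]Rmult_1_l; apply: Rmult_le_compat_r; [apply: pow_le|]; lra.
apply: Rle_trans (prob_union2 p01 _ _) _.
apply: Rle_trans (Rplus_le_compat_l _ _ _ (prob_union2 p01 _ _)) _.
have := prob_union_cols_le p01 col_high; have := prob_union_cols_le p01 col_low.
rewrite N_tail; lra.
Qed.

(* Off the bad events, the column deviations satisfy the hypotheses of an
   admissible level, which bounds the squared Frobenius norm of A - Ã. *)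
Lemma frobenius_off_bad_counts (n N : nat) (p a L tau : R) (w : config n N) :
  (0 < n)%nat -> 0 < p < 1 -> 0 < a <= 1 - p ->
  admissible_level N (INR n) L p a (sigma2 p) tau ->
  ~ bad_counts p tau L w ->
  rsum (fun i => rsum (fun j => (Amat p w i j - Atil w i j) ^ 2)) <=
  6000 / a ^ 4 * (sigma2 p * INR N * L ^ 2 + L ^ 3).
Proof.
move=> n_gt0 p01 a_range [_ [tau_le sum_sq]] good.
have dev_small j : - tau < col_dev p w j < tau.
  by split; apply: Rnot_le_lt => bad; apply: good; [right; left | left]; exists j; lra.
have mass : rsum (fun j => col_dev p w j + p * INR n) <= 2 * p * INR n * INR N + 12 * L.
  rewrite (rsum_ext (G := fun j => INR (ncol w j))); last by move=> j; rewrite /col_dev; ring.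
  by apply: Rlt_le; apply: Rnot_le_lt => bad; apply: good; right; right.
have dev_ge j : 0 <= col_dev p w j + p * INR n by rewrite /col_dev; have := pos_INR (ncol w j); lra.
have m_gt0 : 0 < INR n by apply: lt_0_INR; apply/ltP.
have a4_gt0 : 0 < a ^ 4 by apply: pow_lt; lra.
apply: Rle_trans (frobenius_by_col_dev n_gt0 p01 a_range _) _.
  by move=> j; have := dev_small j; lra.
apply: Rle_trans (Rmult_le_compat_l _ _ _ _ (sum_sq _ dev_small dev_ge mass)) _.
  by apply: Rlt_le; apply: Rdiv_lt_0_compat; [lra | apply: Rmult_lt_0_compat].
by apply: Req_le; field; lra.
Qed.

Lemma sqrt_sum_sq_lt_max (K x y : R) :
  0 < K -> 0 <= x -> 0 < y -> sqrt (K * (x ^ 2 + y ^ 2)) < 2 * sqrt K * Rmax x y.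
Proof.
move=> K_gt0 x_ge0 y_gt0.
have := Rmax_l x y; have := Rmax_r x y => max_ge_y max_ge_x.
have rhs_ge0 : 0 <= 2 * sqrt K * Rmax x y.
  by apply: Rmult_le_pos; [have := sqrt_pos K | ]; lra.
rewrite -(sqrt_pow2 _ rhs_ge0); apply: sqrt_lt_1_alt; split.
  by apply: Rmult_le_pos; [lra | have := pow2_ge_0 x; have := pow2_ge_0 y; lra].
rewrite !Rpow_mult_distr pow2_sqrt; last lra.
have : x ^ 2 <= Rmax x y ^ 2 by apply: pow_incr; lra.
have : y ^ 2 <= Rmax x y ^ 2 by apply: pow_incr; lra.
have : 0 < y ^ 2 by apply: pow_lt.
nra.
Qed.

Lemma opnorm_lt_threshold (n N : nat) (M : 'I_n -> 'I_N -> R) (K s L : R) :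
  (0 < N)%nat -> 0 < K -> 0 <= s -> 0 < L ->
  rsum (fun i => rsum (fun j => M i j ^ 2)) <= K * (s * INR N * L ^ 2 + L ^ 3) ->
  opnorm M < 2 * sqrt K * Rmax (sqrt (s * INR N) * L) (sqrt (L ^ 3)).
Proof.
move=> N_gt0 K_gt0 s_ge0 L_gt0 frob.
set x := sqrt (s * INR N) * L; set y := sqrt (L ^ 3).
have sN_ge0 : 0 <= s * INR N by apply: Rmult_le_pos; [lra | apply: pos_INR].
have L3_gt0 : 0 < L ^ 3 by apply: pow_lt.
have x_ge0 : 0 <= x by apply: Rmult_le_pos; [apply: sqrt_pos | lra].
have y_gt0 : 0 < y by apply: sqrt_lt_R0.
have frob_xy : s * INR N * L ^ 2 + L ^ 3 = x ^ 2 + y ^ 2.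
  by rewrite /x /y Rpow_mult_distr !pow2_sqrt //; lra.
apply: Rle_lt_trans (sqrt_sum_sq_lt_max K_gt0 x_ge0 y_gt0).
apply: opnorm_le_frobenius N_gt0 (sqrt_pos _) _.
have xy_ge0 : 0 <= x ^ 2 + y ^ 2 by have := pow2_ge_0 x; have := pow2_ge_0 y; lra.
by rewrite pow2_sqrt -?frob_xy //; apply: Rmult_le_pos; lra.
Qed.

Lemma p_le_sigma2 (p : R) : 0 <= p < 1 -> p <= sigma2 p.
Proof.
move=> p01; have : 1 <= / (1 - p) by rewrite -Rinv_1; apply: Rinv_le_contravar; lra.
by rewrite /sigma2 /Rdiv; nra.
Qed.

Lemma sigma2_ge0 (p : R) : 0 <= p < 1 -> 0 <= sigma2 p.
Proof. by move=> p01; rewrite /sigma2; apply: Rmult_le_pos; [|apply: Rlt_le; apply: Rinv_0_lt_compat]; lra. Qed.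

Lemma half_lt_ln (x : R) : 2 <= x -> 1/2 < ln x.
Proof.
move=> x_ge2; have := ln_lt_2.
case: (Rle_lt_or_eq_dec _ _ x_ge2) => [x_gt2 | <-]; last lra.
by have := ln_increasing 2 x ltac:(lra) x_gt2; lra.
Qed.

(* Main theorem: C0 = 192 / a^2, c1 = 2 sqrt (6000 / a^4), c2 = 3 with
   a = 1 - p0.  Off the bad counts the norm is below the threshold, and the
   bad counts have probability at most 3 N^-5. *)
Theorem lemma5 :
  forall p0 : R, (0 < p0 < 1)%R ->
  exists C0 c1 c2 : R, (0 < C0)%R /\ (0 < c1)%R /\ (0 < c2)%R /\
    forall (n N : nat) (p : R),
      (1 <= n)%nat -> (n <= N)%nat ->
      (C0 * ln (INR N) <= INR n)%R ->
      (0 < p <= p0)%R ->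
      (@prob n N p
         (fun w => opnorm (fun i j => (@Amat n N p w i j - @Atil n N w i j)%R) >=
                   c1 * Rmax (sqrt (sigma2 p * INR N) * ln (INR N))
                             (sqrt (ln (INR N) ^ 3)))
       <= c2 * / (INR N ^ 5))%R.
Proof.
move=> p0 p0_range; pose a := 1 - p0; pose K := 6000 / a ^ 4.
have a_range : 0 < a <= 1 by rewrite /a; lra.
have a2_gt0 : 0 < a ^ 2 by apply: pow_lt; lra.
have K_gt0 : 0 < K by apply: Rdiv_lt_0_compat; [lra | apply: pow_lt; lra].
exists (192 / a ^ 2), (2 * sqrt K), 3; split; [|split; [|split]].
- by apply: Rdiv_lt_0_compat; lra.
- by have := sqrt_lt_R0 _ K_gt0; lra.
- lra.
move=> n N p n_gt0 n_le_N n_large p_range.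
have N_gt0 : (0 < N)%nat := leq_trans n_gt0 n_le_N.
have p01 : 0 < p < 1 by lra.
have p_le1 : 0 <= p <= 1 by lra.
have p_lt1 : 0 <= p < 1 by lra.
(* for N = 1 the bound 3 N^-5 exceeds 1 *)
case: (ltnP 1 N) => [N_gt1 | N_le1]; last first.
  have -> : INR N ^ 5 = 1 by rewrite (_ : N = 1%nat) /=; [ring | apply/eqP; rewrite eqn_leq N_le1].
  by apply: Rle_trans (prob_le1 p_le1 _) _; rewrite Rinv_1; lra.
set m := INR n; set L := ln (INR N).
have L_gt : 1/2 < L by apply: half_lt_ln; apply: (le_INR 2); apply/leP.
have m_large : 192 * L <= a ^ 2 * m.
  have := Rmult_le_compat_r (a ^ 2) _ _ (Rlt_le _ _ a2_gt0) n_large.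
  by rewrite -/L -/m (_ : 192 / a ^ 2 * L * a ^ 2 = 192 * L); [lra | field; lra].
have m_ge1 : 1 <= m by apply: (le_INR 1); apply/leP.
have p_range' : 0 < p <= 1 by lra.
have [tau adm] := exists_admissible_level N m_ge1 L_gt p_range' a_range
  (p_le_sigma2 p_lt1) m_large.
have [[l [l_range l_exp]] _] := adm.
apply: Rle_trans (prob_mono p_le1 (F := bad_counts p tau L) _)
                 (bad_counts_prob N_gt0 p_le1 l_range l_exp).
move=> w large; apply: NNPP => good.
have a_le : 0 < a <= 1 - p by rewrite /a; lra.
have L_gt0 : 0 < L by lra.
have := opnorm_lt_threshold N_gt0 K_gt0 (sigma2_ge0 p_lt1) L_gt0
  (frobenius_off_bad_counts n_gt0 p01 a_le adm good).
by move=> small; apply: (Rlt_not_ge _ _ small large).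
Qed.
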